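(* Let $\mathcal{M}$ be a model category in which every object is fibrant, and let $F\colon\mathbb{G}\to\mathcal{M}$ be a cofibrant and weakly contractible functor. Then the globular extension $(\mathcal{M},F)$ is contractible.
   Context: The globe category $\mathbb{G}$ has objects $D_n$ ($n\ge0$), generated by $\sigma_n,\tau_n\colon D_{n-1}\to D_n$ ($n\ge1$) with $\sigma_{n+1}\sigma_n=\tau_{n+1}\sigma_n$, $\sigma_{n+1}\tau_n=\tau_{n+1}\tau_n$; $\sigma^i_j=\sigma_i\cdots\sigma_{j+1}$, $\tau^i_j=\tau_i\cdots\tau_{j+1}$. A table of dimensions: integers $i_1,\dots,i_n,i'_1,\dots,i'_{n-1}\ge0$ with $i_k>i'_k<i_{k+1}$; its dimension is its largest entry. For a functor $\mathbb{G}\to\mathcal{M}$ (images denoted as in $\mathbb{G}$), the globular sum of the table is the colimit of $D_{i_1}\xleftarrow{\sigma^{i_1}_{i'_1}}D_{i'_1}\xrightarrow{\tau^{i_2}_{i'_1}}D_{i_2}\leftarrow\cdots\xrightarrow{\tau^{i_n}_{i'_{n-1}}}D_{i_n}$ (it exists since $\mathcal{M}$ is cocomplete, so $(\mathcal{M},F)$ is a globular extension). Two morphisms $f,g\colon D_n\to X$ are globularly parallel if $n=0$ or $f\sigma_n=g\sigma_n$, $f\tau_n=g\tau_n$; a lifting of $(f,g)$ is $h\colon D_{n+1}\to X$ with $h\sigma_{n+1}=f$, $h\tau_{n+1}=g$; $(f,g)\colon D_n\to S$ is admissible if $f,g$ are globularly parallel and $S$ is a globular sum of dimension at most $n+1$;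 the globular extension is contractible if every admissible pair has a lifting. For $F\colon\mathbb{G}\to\mathcal{M}$, set $S^{-1}=\varnothing$, $i_0\colon\varnothing\to D_0$, and for $n\ge1$, $S^{n-1}=D_{n-1}\amalg_{S^{n-2}}D_{n-1}$ (pushout of $i_{n-1}$ along itself) and $i_n=(\tau_n,\sigma_n)\colon S^{n-1}\to D_n$. $F$ is cofibrant if every $i_n$ is a cofibration, and weakly contractible if every $D_n\to\ast$ is a weak equivalence. *)

From mathcomp Require Import ssreflect ssrfun ssrbool eqtype ssrnat seq fintype.

Set Implicit Arguments.
Unset Strict Implicit.
Unset Printing Implicit Defensive.

(* Categories (morphism equality is Leibniz equality).                 *)
Record Category := {
  ob :> Type;
  hom : ob -> ob -> Type;
  idm : forall X, hom X X;
  comp : forall X Y Z, hom Y Z -> hom X Y -> hom X Z;   (* comp g f = g o f *)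
  comp_idl : forall X Y (f : hom X Y), comp (idm Y) f = f;
  comp_idr : forall X Y (f : hom X Y), comp f (idm X) = f;
  comp_assoc : forall X Y Z W (f : hom X Y) (g : hom Y Z) (h : hom Z W),
      comp h (comp g f) = comp (comp h g) f
}.
Arguments hom {c}.
Arguments idm {c}.
Arguments comp {c X Y Z}.

Section CatDefs.
Variable C : Category.

Definition is_initial (I : C) : Prop :=
  forall X : C, exists f : hom I X, forall g : hom I X, g = f.

Definition is_terminal (T : C) : Prop :=
  forall X : C, exists f : hom X T, forall g : hom X T, g = f.

Definition is_pushout (A B D P : C) (f : hom A B) (g : hom A D)
    (u1 : hom B P) (u2 : hom D P) : Prop :=
  comp u1 f = comp u2 g /\
  forall (X : C) (x1 : hom B X) (x2 : hom D X), comp x1 f = comp x2 g ->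
    exists k : hom P X, (comp k u1 = x1 /\ comp k u2 = x2) /\
      forall k' : hom P X, comp k' u1 = x1 -> comp k' u2 = x2 -> k' = k.

Definition is_pullback (A B D P : C) (f : hom B A) (g : hom D A)
    (p1 : hom P B) (p2 : hom P D) : Prop :=
  comp f p1 = comp g p2 /\
  forall (X : C) (x1 : hom X B) (x2 : hom X D), comp f x1 = comp g x2 ->
    exists k : hom X P, (comp p1 k = x1 /\ comp p2 k = x2) /\
      forall k' : hom X P, comp p1 k' = x1 -> comp p2 k' = x2 -> k' = k.

Definition has_finite_colimits : Prop :=
  (exists I : C, is_initial I) /\
  forall (A B D : C) (f : hom A B) (g : hom A D),
    exists (P : C) (u1 : hom B P) (u2 : hom D P), is_pushout f g u1 u2.

Definition has_finite_limits : Prop :=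
  (exists T : C, is_terminal T) /\
  forall (A B D : C) (f : hom B A) (g : hom D A),
    exists (P : C) (p1 : hom P B) (p2 : hom P D), is_pullback f g p1 p2.

Definition morph_class := forall X Y : C, hom X Y -> Prop.

(* f : A -> B is a retract of g : X -> Y *)
Definition is_retract (A B X Y : C) (f : hom A B) (g : hom X Y) : Prop :=
  exists (i : hom A X) (r : hom X A) (j : hom B Y) (s : hom Y B),
    comp r i = idm A /\ comp s j = idm B /\
    comp g i = comp j f /\ comp f r = comp s g.

Definition closed_under_retracts (K : morph_class) : Prop :=
  forall (A B X Y : C) (f : hom A B) (g : hom X Y),
    is_retract f g -> K X Y g -> K A B f.

Definition llp (A B X Y : C) (i : hom A B) (p : hom X Y) : Prop :=
  forall (u : hom A X) (v : hom B Y), comp p u = comp v i ->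
    exists h : hom B X, comp h i = u /\ comp p h = v.

End CatDefs.

(* Model categories (Quillen / Dwyer-Spalinski axioms MC1-MC5).        *)
Record ModelCategory := {
  mcat :> Category;
  weq : morph_class mcat;
  cof : morph_class mcat;
  fib : morph_class mcat;
  mc_colim : has_finite_colimits mcat;
  mc_lim : has_finite_limits mcat;
  mc_2of3_comp : forall (X Y Z : mcat) (f : hom X Y) (g : hom Y Z),
      weq f -> weq g -> weq (comp g f);
  mc_2of3_left : forall (X Y Z : mcat) (f : hom X Y) (g : hom Y Z),
      weq (comp g f) -> weq g -> weq f;
  mc_2of3_right : forall (X Y Z : mcat) (f : hom X Y) (g : hom Y Z),
      weq (comp g f) -> weq f -> weq g;
  mc_retract_weq : closed_under_retracts weq;
  mc_retract_cof : closed_under_retracts cof;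
  mc_retract_fib : closed_under_retracts fib;
  mc_lift_acyclic_cof : forall (A B X Y : mcat) (i : hom A B) (p : hom X Y),
      cof i -> weq i -> fib p -> llp i p;
  mc_lift_acyclic_fib : forall (A B X Y : mcat) (i : hom A B) (p : hom X Y),
      cof i -> fib p -> weq p -> llp i p;
  mc_fact_acyclic_cof : forall (X Y : mcat) (f : hom X Y),
      exists (Z : mcat) (i : hom X Z) (p : hom Z Y),
        cof i /\ weq i /\ fib p /\ comp p i = f;
  mc_fact_acyclic_fib : forall (X Y : mcat) (f : hom X Y),
      exists (Z : mcat) (i : hom X Z) (p : hom Z Y),
        cof i /\ fib p /\ weq p /\ comp p i = f
}.
Arguments weq {m X Y}.
Arguments cof {m X Y}.
Arguments fib {m X Y}.

Definition all_objects_fibrant (M : ModelCategory) : Prop :=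
  forall (X T : M), is_terminal T -> forall u : hom X T, fib u.

(* Functors from the globe category G.  G is presented by generators   *)
(* sigma_n, tau_n : D_{n-1} -> D_n (n >= 1) and the globular relations, *)
(* so a functor G -> C is exactly the following data.                  *)
(* Indexing: gsig n, gtau n : D n -> D (n+1) are sigma_{n+1}, tau_{n+1}. *)
Record GlobeFunctor (C : Category) := {
  Dob : nat -> C;
  gsig : forall n, hom (Dob n) (Dob n.+1);
  gtau : forall n, hom (Dob n) (Dob n.+1);
  glob_ss : forall n, comp (gsig n.+1) (gsig n) = comp (gtau n.+1) (gsig n);
  glob_st : forall n, comp (gsig n.+1) (gtau n) = comp (gtau n.+1) (gtau n)
}.

Section Globular.
Variables (C : Category) (F : GlobeFunctor C).
Local Notation D := (Dob F).

Local Unset Implicit Arguments.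
Inductive is_sigma (j : nat) : forall i, hom (D j) (D i) -> Prop :=
| is_sigma_id : is_sigma j j (idm (D j))
| is_sigma_step : forall i f, is_sigma j i f -> is_sigma j i.+1 (comp (gsig F i) f).

Inductive is_tau (j : nat) : forall i, hom (D j) (D i) -> Prop :=
| is_tau_id : is_tau j j (idm (D j))
| is_tau_step : forall i f, is_tau j i f -> is_tau j i.+1 (comp (gtau F i) f).
Local Set Implicit Arguments.
Arguments is_sigma {j i}.
Arguments is_tau {j i}.

(* A table of dimensions with n+1 entries i_0..i_n and n entries i'_0..i'_{n-1}
   (0-indexed), with i_k > i'_k < i_{k+1}. *)
Record table := {
  tlen : nat;
  ti : 'I_tlen.+1 -> nat;
  ti' : 'I_tlen -> nat;
  tab_left : forall k : 'I_tlen, ti' k < ti (widen_ord (leqnSn tlen) k);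
  tab_right : forall k : 'I_tlen, ti' k < ti (lift ord0 k)
}.

(* dimension (= largest entry) at most m; since i'_k < i_k it suffices
   to bound the i_k, but we bound all entries literally. *)
Definition table_dim_le (T : table) (m : nat) : Prop :=
  (forall k : 'I_(tlen T).+1, ti k <= m) /\ (forall k : 'I_(tlen T), ti' k <= m).

(* cocone on the zigzag D_{i_0} <- D_{i'_0} -> D_{i_1} <- ... -> D_{i_n} *)
Definition zigzag_cocone (T : table) (X : C)
    (c : forall k : 'I_(tlen T).+1, hom (D (ti k)) X) : Prop :=
  forall (k : 'I_(tlen T)) (s : hom (D (ti' k)) (D (ti (widen_ord (leqnSn _) k))))
         (t : hom (D (ti' k)) (D (ti (lift ord0 k)))),
    is_sigma s -> is_tau t ->
    comp (c (widen_ord (leqnSn _) k)) s = comp (c (lift ord0 k)) t.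

Definition is_globular_sum (T : table) (S : C)
    (c : forall k : 'I_(tlen T).+1, hom (D (ti k)) S) : Prop :=
  zigzag_cocone c /\
  forall (X : C) (d : forall k : 'I_(tlen T).+1, hom (D (ti k)) X),
    zigzag_cocone d ->
    exists u : hom S X, (forall k, comp u (c k) = d k) /\
      forall u' : hom S X, (forall k, comp u' (c k) = d k) -> u' = u.

Definition globular_sum_dim_le (S : C) (m : nat) : Prop :=
  exists (T : table) (c : forall k : 'I_(tlen T).+1, hom (D (ti k)) S),
    is_globular_sum c /\ table_dim_le T m.

Definition glob_parallel (X : C) (n : nat) : hom (D n) X -> hom (D n) X -> Prop :=
  match n return hom (D n) X -> hom (D n) X -> Prop with
  | 0 => fun _ _ => True
  | m.+1 => fun f g => comp f (gsig F m) = comp g (gsig F m) /\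
                       comp f (gtau F m) = comp g (gtau F m)
  end.

Definition is_lifting (X : C) (n : nat) (f g : hom (D n) X) (h : hom (D n.+1) X) : Prop :=
  comp h (gsig F n) = f /\ comp h (gtau F n) = g.

Definition admissible (S : C) (n : nat) (f g : hom (D n) S) : Prop :=
  glob_parallel f g /\ globular_sum_dim_le S n.+1.

Definition contractible_ext : Prop :=
  forall (n : nat) (S : C) (f g : hom (D n) S),
    admissible f g -> exists h : hom (D n.+1) S, is_lifting f g h.

(* boundary B n X i : X is a choice of S^{n-1} and i : S^{n-1} -> D_n is i_n.
   S^{-1} is initial; S^{n} = D_n amalg_{S^{n-1}} D_n (pushout of i_n along
   itself, first injection u1, second u2), and i_{n+1} = (tau_{n+1}, sigma_{n+1}). *)
Local Unset Implicit Arguments.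
Inductive boundary : forall n : nat, forall X : C, hom X (D n) -> Prop :=
| boundary0 : forall (X : C) (i : hom X (D 0)), is_initial X -> boundary 0 X i
| boundaryS : forall n (Y : C) (i : hom Y (D n)) (X : C)
                 (u1 u2 : hom (D n) X) (j : hom X (D n.+1)),
    boundary n Y i -> is_pushout i i u1 u2 ->
    comp j u1 = gtau F n -> comp j u2 = gsig F n ->
    boundary n.+1 X j.
Local Set Implicit Arguments.
Arguments boundary {n X}.

End Globular.

Definition cofibrant_globe (M : ModelCategory) (F : GlobeFunctor M) : Prop :=
  forall (n : nat) (X : M) (i : hom X (Dob F n)), @boundary M F n X i -> cof i.

Definition weakly_contractible_globe (M : ModelCategory) (F : GlobeFunctor M) : Prop :=
  forall (n : nat) (T : M), is_terminal T -> forall u : hom (Dob F n) T, weq u.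

(* Each tau_{n+1} is an acyclic cofibration: it is a cofibration because it factors
   as D_n -> S^n -> D_{n+1}, a pushout of the cofibration i_n followed by the
   cofibration i_{n+1}, and a weak equivalence by 2-out-of-3 between weakly
   contractible objects.  A globular sum S is obtained from D_{i_1} by gluing
   disks along iterated tau's, so D_{i_1} -> S lifts against every fibration and is
   an acyclic cofibration; hence S -> * is a weak equivalence, and even an acyclic
   fibration since S is fibrant.  A parallel pair (f, g) : D_n -> S glues to a map
   S^n -> S, which extends along the cofibration i_{n+1} : S^n -> D_{n+1}; the
   extension is the required lifting. *)

From mathcomp Require Import ssreflect ssrfun ssrbool eqtype ssrnat fintype.

Set Implicit Arguments.
Unset Strict Implicit.
Unset Printing Implicit Defensive.

Section Lifting.
Variable C : Category.

Lemma llp_id (A X Y : C) (p : hom X Y) : llp (idm A) p.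
Proof. by move=> u v e; exists u; split; [exact: comp_idr | rewrite e comp_idr]. Qed.

Lemma llp_comp (A B E X Y : C) (i1 : hom A B) (i2 : hom B E) (p : hom X Y) :
  llp i1 p -> llp i2 p -> llp (comp i2 i1) p.
Proof.
move=> lp1 lp2 u v e.
have [l [l1 l2]] := lp1 u (comp v i2) (etrans e (comp_assoc _ _ _)).
have [h [h1 h2]] := lp2 l v l2.
by exists h; rewrite comp_assoc h1.
Qed.

Lemma pushout_llp (A B D P X Y : C) (f : hom A B) (g : hom A D)
    (u1 : hom B P) (u2 : hom D P) (p : hom X Y) :
  is_pushout f g u1 u2 -> llp g p -> llp u1 p.
Proof.
move=> [sq up] lpg u v e.
have [l [l1 l2]] : exists l, comp l g = comp u f /\ comp p l = comp v u2.
  by apply: lpg; rewrite comp_assoc e -!comp_assoc sq.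
have [h [[h1 h2] _]] := up X u l (esym l1).
exists h; split => //.
have vsq : comp (comp v u1) f = comp (comp v u2) g by rewrite -!comp_assoc sq.
have [w [_ w_uniq]] := up Y _ _ vsq.
rewrite (w_uniq v) // (w_uniq (comp p h)) //.
  by rewrite -comp_assoc h1 e.
by rewrite -comp_assoc h2.
Qed.

Lemma factorization_retract (A B Z : C) (f : hom A B) (j : hom A Z) (p : hom Z B) :
  comp p j = f -> llp f p -> is_retract f j.
Proof.
move=> fact lpf.
have [s [sf ps]] := lpf j (idm B) (etrans fact (esym (comp_idl _))).
by exists (idm A), (idm A), s, p; rewrite !comp_idl !comp_idr sf ps fact.
Qed.

End Lifting.

Section Iterates.
Variables (C : Category) (D : nat -> C) (step : forall n, hom (D n) (D n.+1)).

Inductive is_iterate (j : nat) : forall i, hom (D j) (D i) -> Prop :=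
| iterate_id : is_iterate (idm (D j))
| iterate_step i f : is_iterate f -> is_iterate (comp (step i) f).

Lemma iterate_leq j i (f : hom (D j) (D i)) : is_iterate f -> j <= i.
Proof. by elim=> // i' f' _; apply: leqW. Qed.

Lemma iterate_exists j i : j <= i -> exists f : hom (D j) (D i), is_iterate f.
Proof.
elim: i => [|i IH]; first by rewrite leqn0 => /eqP <-; exists (idm _); constructor.
rewrite leq_eqVlt => /orP [/eqP <-|/IH [f itf]]; first by exists (idm _); constructor.
by exists (comp (step i) f); constructor.
Qed.

Local Notation from j := (fun i => hom (D j) (D i)).

Lemma iterateP j i (f : hom (D j) (D i)) : is_iterate f ->
  Tagged (from j) f = Tagged (from j) (idm (D j)) \/
  exists i' (f' : hom (D j) (D i')),
    is_iterate f' /\ Tagged (from j) f = Tagged (from j) (comp (step i') f').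
Proof. by case=> [|i' f' itf']; [left | right; exists i', f']. Qed.

Lemma iterate_uniq j i (f g : hom (D j) (D i)) : is_iterate f -> is_iterate g -> f = g.
Proof.
move=> itf; elim: itf g => [|i' f' itf' IH] g /iterateP [E | [i'' [g' [itg' E]]]];
  have /= ei := congr1 tag E.
- by rewrite (eq_from_Tagged E).
- by exfalso; move: (iterate_leq itg'); rewrite ei ltnn.
- by exfalso; move: (iterate_leq itf'); rewrite -ei ltnn.
- case: ei => ei; subst i''.
  by rewrite (eq_from_Tagged E) (IH _ itg').
Qed.

Lemma iterate_llp X Y (p : hom X Y) : (forall n, llp (step n) p) ->
  forall j i (f : hom (D j) (D i)), is_iterate f -> llp f p.
Proof. by move=> lp j i f; elim=> [|i' f' _ IH]; [exact: llp_id | exact: llp_comp]. Qed.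

End Iterates.

Lemma is_sigma_iterate (C : Category) (F : GlobeFunctor C) j i (f : hom (Dob F j) (Dob F i)) :
  is_sigma C F j i f <-> is_iterate (gsig F) f.
Proof. by split; elim=> *; constructor. Qed.

Lemma is_tau_iterate (C : Category) (F : GlobeFunctor C) j i (f : hom (Dob F j) (Dob F i)) :
  is_tau C F j i f <-> is_iterate (gtau F) f.
Proof. by split; elim=> *; constructor. Qed.

Lemma finite_dependent_choice (A : Type) (P : nat -> A -> Prop)
    (R : nat -> A -> A -> Prop) (n : nat) (a0 : A) :
  P 0 a0 -> (forall m x, m < n -> P m x -> exists2 y, P m.+1 y & R m x y) ->
  exists d : nat -> A,
    [/\ d 0 = a0, forall m, m <= n -> P m (d m) & forall m, m < n -> R m (d m) (d m.+1)].
Proof.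
move=> Pa0; elim: n => [|n IH] ext; first by exists (fun=> a0); split=> // -[].
have [d [d0 Pd Rd]] := IH (fun m x lt_mn => ext m x (ltnW lt_mn)).
have [y Py Ry] := ext n (d n) (ltnSn n) (Pd n (leqnn n)).
exists (fun m => if m <= n then d m else y); split=> [|m|m].
- by rewrite leq0n.
- case: (leqP m n) => [le_mn _ | lt_nm le_mSn]; first exact: Pd.
  by have -> : m = n.+1 by apply/anti_leq/andP.
- rewrite ltnS => le_mn; rewrite le_mn.
  case: (ltnP m n) => [lt_mn | le_nm]; first exact: Rd.
  by have -> : m = n by apply/anti_leq/andP.
Qed.

Section Boundaries.
Variables (C : Category) (F : GlobeFunctor C).
Local Notation D := (Dob F).

Definition parallel_agree n (Y : C) (i : hom Y (D n)) : Prop :=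
  forall (Z : C) (a b : hom (D n) Z), glob_parallel a b -> comp a i = comp b i.

Lemma glob_parallel_tau_sig n : glob_parallel (gtau F n) (gsig F n).
Proof. by case: n => //= n; rewrite glob_ss glob_st. Qed.

Hypothesis colimC : has_finite_colimits C.

Lemma boundary_extend n (Y : C) (i : hom Y (D n)) :
  boundary C F n Y i -> parallel_agree i ->
  exists (P : C) (u1 u2 : hom (D n) P) (j : hom P (D n.+1)),
    [/\ is_pushout i i u1 u2, comp j u1 = gtau F n, comp j u2 = gsig F n,
        boundary C F n.+1 P j & parallel_agree j].
Proof.
move=> bd_i agree_i; have [P [u1 [u2 po]]] := colimC.2 _ _ _ i i.
have [sq up] := po; have ts_i := agree_i _ _ _ (glob_parallel_tau_sig n).
have [j [[ju1 ju2] _]] := up _ _ _ ts_i.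
exists P, u1, u2, j; split=> //; first exact: boundaryS bd_i po ju1 ju2.
move=> Z a b [as_bs at_bt].
have a_i : comp (comp a (gtau F n)) i = comp (comp a (gsig F n)) i.
  by rewrite -!comp_assoc ts_i.
have [k [_ k_uniq]] := up Z _ _ a_i.
rewrite (k_uniq (comp a j)); try by rewrite -comp_assoc (ju1, ju2).
by apply/esym/k_uniq; rewrite -comp_assoc (ju1, ju2) (at_bt, as_bs).
Qed.

Lemma exists_boundary n :
  exists (Y : C) (i : hom Y (D n)), boundary C F n Y i /\ parallel_agree i.
Proof.
elim: n => [|n [Y [i [bd_i agree_i]]]].
  have [I init_I] := colimC.1; have [i _] := init_I (D 0).
  exists I, i; split; first exact: boundary0.
  move=> Z a b _; have [k k_uniq] := init_I Z.
  by rewrite (k_uniq (comp a i)) (k_uniq (comp b i)).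
have [P [u1 [u2 [j [_ _ _ bd_j agree_j]]]]] := boundary_extend bd_i agree_i.
by exists P, j.
Qed.

End Boundaries.

Section GlobularSums.
Variables (C : Category) (F : GlobeFunctor C) (T : table) (S : C).
Variable c : forall k : 'I_(tlen T).+1, hom (Dob F (ti k)) S.
Hypothesis gsum : is_globular_sum c.
Local Notation D := (Dob F).
Local Notation widen k := (widen_ord (leqnSn (tlen T)) k).

Lemma globular_sum_hom_ext (Z : C) (x y : hom S Z) :
  (forall k, comp x (c k) = comp y (c k)) -> x = y.
Proof.
move=> xy; have [coc univ] := gsum.
have xcoc : zigzag_cocone (fun k => comp x (c k)).
  by move=> k s t s_s t_t; rewrite -!comp_assoc (coc k s t s_s t_t).
have [w [_ w_uniq]] := univ Z _ xcoc.
by rewrite (w_uniq x) // (w_uniq y).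
Qed.

Variables (X Y : C) (p : hom X Y).
Hypothesis tau_llp : forall n, llp (gtau F n) p.

Lemma zigzag_lift_step (v : hom S Y) (k : 'I_(tlen T)) (x : hom (D (ti (widen k))) X) :
  comp p x = comp v (c (widen k)) ->
  exists y : hom (D (ti (lift ord0 k))) X,
    comp p y = comp v (c (lift ord0 k)) /\
    forall (s : hom (D (ti' k)) (D (ti (widen k))))
           (t : hom (D (ti' k)) (D (ti (lift ord0 k)))),
      is_sigma C F _ _ s -> is_tau C F _ _ t -> comp x s = comp y t.
Proof.
move=> px; have [coc _] := gsum.
have [s0 s0_it] := iterate_exists (gsig F) (ltnW (tab_left k)).
have [t0 t0_it] := iterate_exists (gtau F) (ltnW (tab_right k)).
have /is_sigma_iterate s0_s := s0_it; have /is_tau_iterate t0_t := t0_it.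
have sq : comp p (comp x s0) = comp (comp v (c (lift ord0 k))) t0.
  by rewrite comp_assoc px -!comp_assoc (coc k s0 t0 s0_s t0_t).
have [y [ys py]] := iterate_llp tau_llp t0_it sq.
exists y; split=> // s t /is_sigma_iterate s_it /is_tau_iterate t_it.
by rewrite (iterate_uniq s_it s0_it) (iterate_uniq t_it t0_it) ys.
Qed.

Lemma globular_sum_llp : llp (c ord0) p.
Proof.
move=> u v sq.
(* The legs of the lift are built one after the other; since their types depend
   on the index, the sequence under construction consists of tagged pairs. *)
pose L (o : 'I_(tlen T).+1) := hom (D (ti o)) X.
pose A := {o : 'I_(tlen T).+1 & L o}.
pose P m (z : A) := tag z = inord m /\ comp p (tagged z) = comp v (c (tag z)).
pose R (m : nat) (z w : A) := forall k : 'I_(tlen T), tag z = widen k ->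
  tag w = lift ord0 k -> forall (s : hom (D (ti' k)) (D (ti (tag z))))
                                (t : hom (D (ti' k)) (D (ti (tag w)))),
  is_sigma C F _ _ s -> is_tau C F _ _ t -> comp (tagged z) s = comp (tagged w) t.
have P0 : P 0 (Tagged L u) by split=> //; apply: val_inj; rewrite /= inordK.
have [|d [d0 Pd Rd]] := finite_dependent_choice (R := R) (n := tlen T) P0.
  move=> m [o x] lt_m [/= o_m px].
  have eo : o = widen (Ordinal lt_m) by apply: val_inj; rewrite o_m /= inordK // ltnW.
  clear o_m; subst o.
  have [y [py xy]] := zigzag_lift_step px.
  exists (Tagged L y); first by split=> //; apply: ord_inj; rewrite lift0 inordK.
  move=> k' /= /(congr1 val) /= mk' _.
  have -> : k' = Ordinal lt_m by apply: val_inj.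
  exact: xy.
have tag_d (o : 'I_(tlen T).+1) : tag (d o) = o.
  by have [eo _] := Pd o (leq_ord o); rewrite eo inord_val.
pose e o := etagged (tag_d o).
have dE (o : 'I_(tlen T).+1) : d o = Tagged L (e o) by rewrite etaggedK.
have e_coc : zigzag_cocone e.
  move=> k s t s_s t_t; have := Rd k (ltn_ord k).
  rewrite [d k](dE (widen k)) -lift0 dE.
  by apply.
have e_lift (o : 'I_(tlen T).+1) : comp p (e o) = comp v (c o).
  by have [_] := Pd o (leq_ord o); rewrite dE.
have [h [hc _]] := gsum.2 X e e_coc.
exists h; split.
  by rewrite hc; apply: eq_from_Tagged; rewrite -dE.
by apply: globular_sum_hom_ext => k; rewrite -comp_assoc hc e_lift.
Qed.

End GlobularSums.

Section ModelCategory.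
Variable M : ModelCategory.

Lemma cof_of_llp_acyclic_fib (A B : M) (i : hom A B) :
  (forall (X Y : M) (p : hom X Y), fib p -> weq p -> llp i p) -> cof i.
Proof.
move=> lp; have [Z [j [p [cj [fp [wp fact]]]]]] := mc_fact_acyclic_fib i.
exact: mc_retract_cof (factorization_retract fact (lp _ _ p fp wp)) cj.
Qed.

Lemma acyclic_cof_of_llp_fib (A B : M) (i : hom A B) :
  (forall (X Y : M) (p : hom X Y), fib p -> llp i p) -> cof i /\ weq i.
Proof.
move=> lp; have [Z [j [p [cj [wj [fp fact]]]]]] := mc_fact_acyclic_cof i.
have ret := factorization_retract fact (lp _ _ p fp).
by split; [exact: mc_retract_cof ret cj | exact: mc_retract_weq ret wj].
Qed.

Lemma weq_of_weakly_contractible (A B T : M) (f : hom A B) (tA : hom A T) (tB : hom B T) :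
  is_terminal T -> weq tA -> weq tB -> weq f.
Proof.
move=> term_T wA wB; apply: mc_2of3_left wB.
by have [t t_uniq] := term_T A; rewrite (t_uniq (comp tB f)) -(t_uniq tA).
Qed.

Variable F : GlobeFunctor M.
Hypotheses (cofF : cofibrant_globe F) (wcF : weakly_contractible_globe F).

Lemma gtau_acyclic_cof n : cof (gtau F n) /\ weq (gtau F n).
Proof.
split.
  apply: cof_of_llp_acyclic_fib => X Y p fp wp.
  have [Z [i [bd_i agree_i]]] := exists_boundary F (mc_colim M) n.
  have [P [u1 [u2 [j [po ju1 _ bd_j _]]]]] := boundary_extend (mc_colim M) bd_i agree_i.
  rewrite -ju1; apply: llp_comp.
    exact: pushout_llp po (mc_lift_acyclic_fib (cofF bd_i) fp wp).
  exact: mc_lift_acyclic_fib (cofF bd_j) fp wp.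
have [[T term_T] _] := mc_lim M.
have [t0 _] := term_T (Dob F n); have [t1 _] := term_T (Dob F n.+1).
exact: weq_of_weakly_contractible term_T (wcF term_T t0) (wcF term_T t1).
Qed.

Lemma globular_sum_weakly_contractible (T : table) (S Z : M)
    (c : forall k : 'I_(tlen T).+1, hom (Dob F (ti k)) S) :
  is_globular_sum c -> is_terminal Z -> forall tS : hom S Z, weq tS.
Proof.
move=> gsum term_Z tS.
have [_ wc0] : cof (c ord0) /\ weq (c ord0).
  apply: acyclic_cof_of_llp_fib => X Y p fp; apply: (globular_sum_llp gsum) => n.
  by have [cg wg] := gtau_acyclic_cof n; exact: mc_lift_acyclic_cof.
by apply: mc_2of3_right wc0; exact: wcF term_Z _.
Qed.

End ModelCategory.

Theorem proposition5 (M : ModelCategory) (F : GlobeFunctor M) :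
  all_objects_fibrant M ->
  cofibrant_globe F ->
  weakly_contractible_globe F ->
  contractible_ext F.
Proof.
move=> fibrant cofF wcF n S f g [fg [T [c [gsum _]]]].
have [[Z term_Z] _] := mc_lim M; have [tS _] := term_Z S.
have [Y [i [bd_i agree_i]]] := exists_boundary F (mc_colim M) n.
have [P [u1 [u2 [j [[_ up] ju1 ju2 bd_j _]]]]] := boundary_extend (mc_colim M) bd_i agree_i.
have [k [[ku1 ku2] _]] := up S g f (esym (agree_i _ _ _ fg)).
have [tD _] := term_Z (Dob F n.+1).
have square : comp tS k = comp tD j.
  by have [t t_uniq] := term_Z P; rewrite (t_uniq (comp tS k)) (t_uniq (comp tD j)).
have [h [hj _]] := mc_lift_acyclic_fib (cofF _ _ _ bd_j)
  (fibrant _ _ term_Z tS) (globular_sum_weakly_contractible cofF wcF gsum term_Z tS) square.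
by exists h; split; rewrite -(ju1, ju2) comp_assoc hj (ku1, ku2).
Qed.
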